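(* Let $(x,y)$ be a feasible solution of BLP1. Define the $m\times n$ 0-1 matrix $x^*$ by choosing, for each $i\in M$, one arbitrary $j\in N$ minimizing $c_{ij}+\sum_{k\in M,\ell\in N}q_{ijk\ell}y_{k\ell}$ and setting $x^*_{ij}=1$ for that $j$ and $x^*_{ij'}=0$ otherwise; then define the $m\times n$ 0-1 matrix $y^*$ by choosing, for each $j\in N$, one arbitrary $i\in M$ minimizing $d_{ij}+\sum_{k\in M,\ell\in N}q_{k\ell ij}x^*_{k\ell}$ and setting $y^*_{ij}=1$ for that $i$ and $y^*_{i'j}=0$ otherwise (procedure RxOy). Define RyOx symmetrically: first $y^*$ with, for each $j$, $y^*_{ij}=1$ for one $i$ minimizing $d_{ij}+\sum_{k,\ell}q_{k\ell ij}x_{k\ell}$, then $x^*$ with, for each $i$, $x^*_{ij}=1$ for one $j$ minimizing $c_{ij}+\sum_{k,\ell}q_{ijk\ell}y^*_{k\ell}$. If $(x^*,y^* )$ is obtained from $(x,y)$ by RxOy or by RyOx, then $(x^*,y^* )$ is feasible for BQAP1 and $f_1(x^*,y^* )\le f_1(x,y)$. The analogous statement holds for BLP2 and BQAP2 (with the RxOy and RyOx procedures adapted to the BQAP2 dimensions): $f_2(x^*,y^* )\le f_2(x,y)$.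
   Context: $M=\{1,\dots,m\}$, $N=\{1,\dots,n\}$. BQAP1: data $Q=(q_{ijk\ell})$ ($m\times n\times m\times n$ real array), real $m\times n$ matrices $c,d$; feasible solutions are pairs $(x,y)$ of $m\times n$ 0-1 matrices with $\sum_{j=1}^n x_{ij}=1$ for all $i\in M$ and $\sum_{i=1}^m y_{ij}=1$ for all $j\in N$; $f_1(x,y)=\sum_{i,k\in M}\sum_{j,\ell\in N} q_{ijk\ell}x_{ij}y_{k\ell}+\sum_{i\in M,j\in N}c_{ij}x_{ij}+\sum_{i\in M,j\in N}d_{ij}y_{ij}$. BLP1 is the relaxation in which the constraints $x_{ij},y_{ij}\in\{0,1\}$ are replaced by $0\le x_{ij},y_{ij}\le1$ (same equality constraints, same objective $f_1$). BQAP2: data $Q$ ($m\times m\times n\times n$ real array), real $m\times m$ matrix $c$, real $n\times n$ matrix $d$; feasible $(x,y)$: $x$ an $m\times m$ 0-1 matrix with $\sum_{j=1}^m x_{ij}=1$ for all $i\in M$, $y$ an $n\times n$ 0-1 matrix with $\sum_{i=1}^n y_{ij}=1$ for all $j\in N$; $f_2(x,y)=\sum_{i,j\in M}\sum_{k,\ell\in N} q_{ijk\ell}x_{ij}y_{k\ell}+\sum_{i,j\in M}c_{ij}x_{ij}+\sum_{i,j\in N}d_{ij}y_{ij}$; BLP2 is its relaxation with $0\le x_{ij},y_{k\ell}\le1$. For BQAP2, RxOy sets, for each $i\in M$, $x^*_{ij}=1$ for one $j\in M$ minimizing $c_{ij}+\sum_{k,\ell\in N}q_{ijk\ell}y_{k\ell}$,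 then for each $\ell\in N$, $y^*_{k\ell}=1$ for one $k\in N$ minimizing $d_{k\ell}+\sum_{i,j\in M}q_{ijk\ell}x^*_{ij}$; RyOx is symmetric. *)

(* Scalars in an arbitrary real field R (the paper uses the reals). *)
From HB Require Import structures.
From mathcomp Require Import all_boot all_order all_algebra.
Set Implicit Arguments. Unset Strict Implicit. Unset Printing Implicit Defensive.
Import Order.TTheory GRing.Theory Num.Theory.
Local Open Scope ring_scope.

Section Defs.
Variable R : realFieldType.

Definition row_sum1 p q (x : 'M[R]_(p, q)) := forall i, \sum_j x i j = 1.
Definition col_sum1 p q (y : 'M[R]_(p, q)) := forall j, \sum_i y i j = 1.
Definition entries01 p q (x : 'M[R]_(p, q)) := forall i j, x i j = 0 \/ x i j = 1.
Definition entries_unit p q (x : 'M[R]_(p, q)) := forall i j, 0 <= x i j <= 1.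

Definition relax_feasible p q p' q' (x : 'M[R]_(p, q)) (y : 'M[R]_(p', q')) :=
  [/\ row_sum1 x, col_sum1 y, entries_unit x & entries_unit y].
Definition int_feasible p q p' q' (x : 'M[R]_(p, q)) (y : 'M[R]_(p', q')) :=
  [/\ row_sum1 x, col_sum1 y, entries01 x & entries01 y].

Definition row_pick p q (w : 'I_p -> 'I_q -> R) (x' : 'M[R]_(p, q)) :=
  forall i, exists j, (forall j', w i j <= w i j') /\
                      (forall j', x' i j' = if j' == j then 1 else 0).
Definition col_pick p q (w : 'I_p -> 'I_q -> R) (y' : 'M[R]_(p, q)) :=
  forall j, exists i, (forall i', w i j <= w i' j) /\
                      (forall i', y' i' j = if i' == i then 1 else 0).

Variables m n : nat.
Definition f1 (Q : 'I_m -> 'I_n -> 'I_m -> 'I_n -> R) (c d : 'M[R]_(m, n))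
    (x y : 'M[R]_(m, n)) : R :=
  \sum_(i < m) \sum_(j < n) \sum_(k < m) \sum_(l < n) Q i j k l * x i j * y k l
  + \sum_(i < m) \sum_(j < n) c i j * x i j
  + \sum_(i < m) \sum_(j < n) d i j * y i j.

Definition RxOy1 (Q : 'I_m -> 'I_n -> 'I_m -> 'I_n -> R) (c d : 'M[R]_(m, n))
    (x y x' y' : 'M[R]_(m, n)) :=
  row_pick (fun i j => c i j + \sum_(k < m) \sum_(l < n) Q i j k l * y k l) x' /\
  col_pick (fun i j => d i j + \sum_(k < m) \sum_(l < n) Q k l i j * x' k l) y'.
Definition RyOx1 (Q : 'I_m -> 'I_n -> 'I_m -> 'I_n -> R) (c d : 'M[R]_(m, n))
    (x y x' y' : 'M[R]_(m, n)) :=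
  col_pick (fun i j => d i j + \sum_(k < m) \sum_(l < n) Q k l i j * x k l) y' /\
  row_pick (fun i j => c i j + \sum_(k < m) \sum_(l < n) Q i j k l * y' k l) x'.

Definition f2 (Q : 'I_m -> 'I_m -> 'I_n -> 'I_n -> R) (c : 'M[R]_m) (d : 'M[R]_n)
    (x : 'M[R]_m) (y : 'M[R]_n) : R :=
  \sum_(i < m) \sum_(j < m) \sum_(k < n) \sum_(l < n) Q i j k l * x i j * y k l
  + \sum_(i < m) \sum_(j < m) c i j * x i j
  + \sum_(i < n) \sum_(j < n) d i j * y i j.

Definition RxOy2 (Q : 'I_m -> 'I_m -> 'I_n -> 'I_n -> R) (c : 'M[R]_m) (d : 'M[R]_n)
    (x : 'M[R]_m) (y : 'M[R]_n) (x' : 'M[R]_m) (y' : 'M[R]_n) :=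
  row_pick (fun i j => c i j + \sum_(k < n) \sum_(l < n) Q i j k l * y k l) x' /\
  col_pick (fun k l => d k l + \sum_(i < m) \sum_(j < m) Q i j k l * x' i j) y'.
Definition RyOx2 (Q : 'I_m -> 'I_m -> 'I_n -> 'I_n -> R) (c : 'M[R]_m) (d : 'M[R]_n)
    (x : 'M[R]_m) (y : 'M[R]_n) (x' : 'M[R]_m) (y' : 'M[R]_n) :=
  col_pick (fun k l => d k l + \sum_(i < m) \sum_(j < m) Q i j k l * x i j) y' /\
  row_pick (fun i j => c i j + \sum_(k < n) \sum_(l < n) Q i j k l * y' k l) x'.
End Defs.

(** Both objectives are bilinear: with [y] fixed, [f] is a linear form in [x]
    whose coefficients are the row costs, and with [x] fixed a linear form in [y]
    whose coefficients are the column costs.  A linear form over row-stochastic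
    matrices is minimized by putting each row's whole mass on a cheapest entry, so
    each half-step of RxOy or RyOx can only decrease [f]; the chosen matrices are
    0-1 assignments by construction. *)
From HB Require Import structures.
From mathcomp Require Import all_boot all_order all_algebra.
Import Order.TTheory GRing.Theory Num.Theory.
Set Implicit Arguments. Unset Strict Implicit.
Local Open Scope ring_scope.

Section LinearAssignment.
Variable R : realFieldType.
Variables p q : nat.
Implicit Types (w : 'I_p -> 'I_q -> R) (x : 'M[R]_(p, q)).

Definition mx_pair w x : R := \sum_i \sum_j w i j * x i j.

Lemma sum_mul_delta r (F : 'I_r -> R) (j0 : 'I_r) (G : 'I_r -> R) :
  (forall j, G j = if j == j0 then 1 else 0) -> \sum_j F j * G j = F j0.
Proof.
move=> G_delta; rewrite (bigD1 j0) //= G_delta eqxx mulr1 big1 ?addr0 // => j.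
by move=> /negbTE ne_j; rewrite G_delta ne_j mulr0.
Qed.

Lemma row_pick_le w x x' :
  row_sum1 x -> entries_unit x -> row_pick w x' -> mx_pair w x' <= mx_pair w x.
Proof.
move=> x_sum1 x_unit x'_pick; apply: ler_sum => i _.
have [j0 [j0_min x'_delta]] := x'_pick i.
rewrite (sum_mul_delta (w i) x'_delta).
have -> : w i j0 = \sum_j w i j0 * x i j by rewrite -mulr_sumr x_sum1 mulr1.
apply: ler_sum => j _; apply: ler_wpM2r => //.
by have /andP[] := x_unit i j.
Qed.

Lemma row_pick_int w x' : row_pick w x' -> row_sum1 x' /\ entries01 x'.
Proof.
move=> x'_pick; split=> i; have [j0 [_ x'_delta]] := x'_pick i.
  by rewrite -[RHS](sum_mul_delta (fun=> 1) x'_delta); apply: eq_bigr => j _; rewrite mul1r.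
by move=> j; rewrite x'_delta; case: eqP; [right | left].
Qed.

End LinearAssignment.

Section Transpose.
Variable R : realFieldType.
Variables p q : nat.
Implicit Types (w : 'I_p -> 'I_q -> R) (y : 'M[R]_(p, q)).

Definition trfun w : 'I_q -> 'I_p -> R := fun j i => w i j.

Lemma mx_pair_trmx w y : mx_pair w y = mx_pair (trfun w) y^T.
Proof.
by rewrite /mx_pair exchange_big; apply: eq_bigr => j _; apply: eq_bigr => i _; rewrite mxE.
Qed.

Lemma row_sum1_trmx y : row_sum1 y^T <-> col_sum1 y.
Proof. by split=> y_sum1 j; rewrite -(y_sum1 j); apply: eq_bigr => i _; rewrite mxE. Qed.

Lemma entries_unit_trmx y : entries_unit y -> entries_unit y^T.
Proof. by move=> y_unit j i; rewrite mxE. Qed.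

Lemma entries01_trmx y : entries01 y^T -> entries01 y.
Proof. by move=> y01 i j; have := y01 j i; rewrite mxE. Qed.

Lemma col_pick_trmx w y : col_pick w y -> row_pick (trfun w) y^T.
Proof.
move=> y_pick j; have [i0 [i0_min y_delta]] := y_pick j.
by exists i0; split=> // i; rewrite mxE y_delta.
Qed.

Lemma col_pick_le w y y' :
  col_sum1 y -> entries_unit y -> col_pick w y' -> mx_pair w y' <= mx_pair w y.
Proof.
move=> /row_sum1_trmx y_sum1 /entries_unit_trmx y_unit /col_pick_trmx y'_pick.
by rewrite !mx_pair_trmx; apply: row_pick_le y'_pick.
Qed.

Lemma col_pick_int w y' : col_pick w y' -> col_sum1 y' /\ entries01 y'.
Proof.
by move=> /col_pick_trmx /row_pick_int [/row_sum1_trmx ? /entries01_trmx].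
Qed.

End Transpose.

Lemma exchange_sum4 (V : nmodType) r s r' s'
    (F : 'I_r -> 'I_s -> 'I_r' -> 'I_s' -> V) :
  \sum_i \sum_j \sum_k \sum_l F i j k l = \sum_k \sum_l \sum_i \sum_j F i j k l.
Proof.
under eq_bigr do rewrite exchange_big /=.
under eq_bigr do under eq_bigr do rewrite exchange_big /=.
by rewrite exchange_big; apply: eq_bigr => k _; rewrite exchange_big.
Qed.

Section BilinearObjective.
Variable R : realFieldType.
Variables p q p' q' : nat.
Variable Q : 'I_p -> 'I_q -> 'I_p' -> 'I_q' -> R.
Variables (c : 'M[R]_(p, q)) (d : 'M[R]_(p', q')).
Implicit Types (x : 'M[R]_(p, q)) (y : 'M[R]_(p', q')).

(* [f1] and [f2] are, up to conversion, the instances with [(p, q, p', q')]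
   equal to [(m, n, m, n)] and [(m, m, n, n)]. *)
Definition bilin_obj x y : R :=
  \sum_(i < p) \sum_(j < q) \sum_(k < p') \sum_(l < q') Q i j k l * x i j * y k l
  + mx_pair c x + mx_pair d y.

Definition row_cost y i j := c i j + \sum_(k < p') \sum_(l < q') Q i j k l * y k l.
Definition col_cost x k l := d k l + \sum_(i < p) \sum_(j < q) Q i j k l * x i j.

Lemma bilin_obj_row_costE x y : bilin_obj x y = mx_pair (row_cost y) x + mx_pair d y.
Proof.
rewrite /bilin_obj /row_cost /mx_pair -big_split /=; congr (_ + _).
apply: eq_bigr => i _; rewrite -big_split /=; apply: eq_bigr => j _.
rewrite mulrDl addrC mulr_suml; congr (_ + _); apply: eq_bigr => k _.
by rewrite mulr_suml; apply: eq_bigr => l _; rewrite mulrAC.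
Qed.

Lemma bilin_obj_col_costE x y : bilin_obj x y = mx_pair c x + mx_pair (col_cost x) y.
Proof.
rewrite /bilin_obj /col_cost /mx_pair addrAC [RHS]addrC; congr (_ + _).
rewrite exchange_sum4 -big_split /=; apply: eq_bigr => k _.
rewrite -big_split /=; apply: eq_bigr => l _.
rewrite mulrDl addrC mulr_suml; congr (_ + _); apply: eq_bigr => i _.
by rewrite mulr_suml.
Qed.

Lemma bilin_obj_row_pick_le x y x' :
  row_sum1 x -> entries_unit x -> row_pick (row_cost y) x' ->
  bilin_obj x' y <= bilin_obj x y.
Proof. by move=> *; rewrite !bilin_obj_row_costE lerD2r; apply: row_pick_le. Qed.

Lemma bilin_obj_col_pick_le x y y' :
  col_sum1 y -> entries_unit y -> col_pick (col_cost x) y' ->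
  bilin_obj x y' <= bilin_obj x y.
Proof. by move=> *; rewrite !bilin_obj_col_costE lerD2l; apply: col_pick_le. Qed.

Lemma picks_int_feasible wx wy x' y' :
  row_pick wx x' -> col_pick wy y' -> int_feasible x' y'.
Proof. by move=> /row_pick_int[? ?] /col_pick_int[? ?]; split. Qed.

Lemma RxOy_descent x y x' y' :
  relax_feasible x y -> row_pick (row_cost y) x' -> col_pick (col_cost x') y' ->
  int_feasible x' y' /\ bilin_obj x' y' <= bilin_obj x y.
Proof.
case=> x_sum1 y_sum1 x_unit y_unit x'_pick y'_pick.
split; first exact: picks_int_feasible x'_pick y'_pick.
apply: (le_trans (bilin_obj_col_pick_le y_sum1 y_unit y'_pick)).
exact: bilin_obj_row_pick_le x_sum1 x_unit x'_pick.
Qed.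

Lemma RyOx_descent x y x' y' :
  relax_feasible x y -> col_pick (col_cost x) y' -> row_pick (row_cost y') x' ->
  int_feasible x' y' /\ bilin_obj x' y' <= bilin_obj x y.
Proof.
case=> x_sum1 y_sum1 x_unit y_unit y'_pick x'_pick.
split; first exact: picks_int_feasible x'_pick y'_pick.
apply: (le_trans (bilin_obj_row_pick_le x_sum1 x_unit x'_pick)).
exact: bilin_obj_col_pick_le y_sum1 y_unit y'_pick.
Qed.

End BilinearObjective.

Lemma bilin_obj_descent (R : realFieldType) p q p' q'
    (Q : 'I_p -> 'I_q -> 'I_p' -> 'I_q' -> R) c d x y x' y' :
  relax_feasible x y ->
  (row_pick (row_cost Q c y) x' /\ col_pick (col_cost Q d x') y') \/
  (col_pick (col_cost Q d x) y' /\ row_pick (row_cost Q c y') x') ->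
  int_feasible x' y' /\ bilin_obj Q c d x' y' <= bilin_obj Q c d x y.
Proof. by move=> feas [[] | []]; [apply: RxOy_descent | move/RyOx_descent; apply]. Qed.

Theorem theorem7 (R : realFieldType) (m n : nat) :
  (forall (Q : 'I_m -> 'I_n -> 'I_m -> 'I_n -> R) (c d x y x' y' : 'M[R]_(m, n)),
     relax_feasible x y ->
     RxOy1 Q c d x y x' y' \/ RyOx1 Q c d x y x' y' ->
     int_feasible x' y' /\ f1 Q c d x' y' <= f1 Q c d x y) /\
  (forall (Q : 'I_m -> 'I_m -> 'I_n -> 'I_n -> R) (c : 'M[R]_m) (d : 'M[R]_n)
          (x x' : 'M[R]_m) (y y' : 'M[R]_n),
     relax_feasible x y ->
     RxOy2 Q c d x y x' y' \/ RyOx2 Q c d x y x' y' ->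
     int_feasible x' y' /\ f2 Q c d x' y' <= f2 Q c d x y).
Proof. by split=> Q c d *; apply: bilin_obj_descent. Qed.
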